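(* Let $\mathbb{K}\in\{\mathbb{R},\mathbb{C}\}$, let $X$ be a linear space over $\mathbb{K}$ and $A\colon X\to\mathbb{K}$ a nonzero additive functional, and put $\phi(x,y)=A(x)A(y)$ for $x,y\in X$. Then a function $f\colon X\to\mathbb{K}$ satisfies $f(x+y)=f(x)f(y)-\phi(x,y)$ for all $x,y\in X$ if and only if $f(x)=\delta A(x)+1$ for all $x\in X$ with $\delta\in\{1,-1\}$.
   Context: A functional $A\colon X\to\mathbb{K}$ is additive if $A(x+y)=A(x)+A(y)$ for all $x,y\in X$ (it need not be linear). *)

From HB Require Import structures.
From mathcomp Require Import all_boot all_order all_algebra.
From mathcomp Require Import reals.
From mathcomp Require Import complex.
Set Implicit Arguments. Unset Strict Implicit. Unset Printing Implicit Defensive.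
Import Order.TTheory GRing.Theory Num.Theory.
Local Open Scope ring_scope.

Definition additive_functional (K : nzRingType) (X : zmodType) (A : X -> K) : Prop :=
  forall x y : X, A (x + y) = A x + A y.

Definition phiA (K : nzRingType) (X : zmodType) (A : X -> K) (x y : X) : K :=
  A x * A y.

From mathcomp Require Import all_boot all_order all_algebra.
From mathcomp Require Import reals.
From mathcomp Require Import complex.
From mathcomp Require Import ring.
Set Implicit Arguments. Unset Strict Implicit. Unset Printing Implicit Defensive.
Import Order.TTheory GRing.Theory Num.Theory.
Local Open Scope ring_scope.

(* Expanding f(x + z + z) in the two ways allowed by associativity shows that
   f - 1 is proportional to A; plugging f = c A + 1 back into the equation at
   (z, z) with A z != 0 forces c^2 = 1.  Conversely c A + 1 is a solution as
   soon as c^2 = 1. *)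

Section Solutions.
Variables (K : fieldType) (X : zmodType) (A : X -> K) (f : X -> K).
Hypothesis additiveA : additive_functional A.
Hypothesis f_eq : forall x y, f (x + y) = f x * f y - phiA A x y.

Lemma f_assoc_identity x z : A z * (A z * (f x - 1) - A x * (f z - 1)) = 0.
Proof.
have /eqP := congr1 f (addrA x z z); rewrite !f_eq /phiA !additiveA -subr_eq0 => /eqP e.
by rewrite -[RHS]oppr0 -e; ring.
Qed.

Lemma f_affine x z : A z != 0 -> f x = (f z - 1) / A z * A x + 1.
Proof.
move=> Az0; have /eqP := f_assoc_identity x z.
rewrite mulf_eq0 (negbTE Az0) /= subr_eq0 => /eqP proportional.
by apply/eqP; rewrite -subr_eq; apply/eqP; rewrite -[f x - 1](mulKf Az0) proportional; ring.
Qed.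

Lemma f_slope_sqr z : A z != 0 -> ((f z - 1) / A z) ^+ 2 = 1.
Proof.
move=> Az0; set c := (f z - 1) / A z.
have aff x : f x = c * A x + 1 by exact: f_affine.
have := f_eq z z; rewrite !aff additiveA /phiA => e.
have : A z ^+ 2 * (c ^+ 2 - 1) = 0.
  by rewrite -(subrr (c * (A z + A z) + 1)) {1}e; ring.
by move/eqP; rewrite mulf_eq0 expf_eq0 /= (negbTE Az0) subr_eq0 => /eqP.
Qed.

End Solutions.

Lemma affine_solution (K : comNzRingType) (X : zmodType) (A : X -> K) (d : K) :
  additive_functional A -> d ^+ 2 = 1 ->
  forall x y, d * A (x + y) + 1 = (d * A x + 1) * (d * A y + 1) - phiA A x y.
Proof.
move=> additiveA d2 x y; rewrite additiveA /phiA.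
have -> : A x * A y = d ^+ 2 * (A x * A y) by rewrite d2 mul1r.
ring.
Qed.

Lemma additive_product_equation_solutions
    (K : fieldType) (X : zmodType) (A : X -> K) :
  additive_functional A -> (exists x : X, A x != 0) ->
  forall f : X -> K,
    (forall x y : X, f (x + y) = f x * f y - phiA A x y) <->
    (exists delta : K, (delta = 1 \/ delta = -1) /\
       forall x : X, f x = delta * A x + 1).
Proof.
move=> additiveA [z Az0] f; split=> [f_eq | [d [d_pm1 f_aff]] x y].
- exists ((f z - 1) / A z); split; last by move=> x; apply: f_affine.
  by have /eqP := f_slope_sqr additiveA f_eq Az0; rewrite sqrf_eq1 => /orP[] /eqP; [left | right].
- have d2 : d ^+ 2 = 1 by case: d_pm1 => ->; rewrite ?sqrrN expr1n.
  by rewrite !f_aff affine_solution.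
Qed.

Theorem mainTheorem10 (R : realType) :
  (forall (X : lmodType R) (A : X -> R),
     additive_functional A -> (exists x : X, A x != 0) ->
     forall f : X -> R,
       (forall x y : X, f (x + y) = f x * f y - phiA A x y) <->
       (exists delta : R, (delta = 1 \/ delta = -1) /\
          forall x : X, f x = delta * A x + 1))
  /\
  (forall (X : lmodType R[i]) (A : X -> R[i]),
     additive_functional A -> (exists x : X, A x != 0) ->
     forall f : X -> R[i],
       (forall x y : X, f (x + y) = f x * f y - phiA A x y) <->
       (exists delta : R[i], (delta = 1 \/ delta = -1) /\
          forall x : X, f x = delta * A x + 1)).
Proof.
split=> X A; first exact: additive_product_equation_solutions.
exact: (@additive_product_equation_solutions (R[i] : fieldType) X A).
Qed.
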